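(* Let $\mathcal A,\mathcal B>0$, $\alpha,\beta\in(0,1)$, $h,\tau>0$, and for a real number $\theta$ let $s=\sin^2(\theta h/2)$, $$\widetilde{\mathcal Q}=\Big[1-\tfrac{4}{35}s^3\Big]+4g_0^{(\alpha,\beta)}s\Big[1+\tfrac13 s+\tfrac{8}{45}s^2\Big],\qquad \widetilde{\mathcal P}=\Big[1-\tfrac{4}{35}s^3\Big]-4g_1^{(\alpha,\beta)}s\Big[1+\tfrac13 s+\tfrac{8}{45}s^2\Big].$$ Then $|\widetilde{\mathcal P}/\widetilde{\mathcal Q}|\le1$ for every real $\theta$.
   Context: $\varpi_\ell^{(\sigma)}=(-1)^\ell\binom{\sigma}{\ell}$, $g_0^{(\sigma)}=\frac{1+\sigma}{2}\varpi_0^{(\sigma)}$, $g_\ell^{(\sigma)}=\frac{1+\sigma}{2}\varpi_\ell^{(\sigma)}+\frac{1-\sigma}{2}\varpi_{\ell-1}^{(\sigma)}$ ($\ell\ge1$); $\mu_\alpha=\tau^\alpha\mathcal A/h^2$, $\mu_\beta=\tau^\beta\mathcal B/h^2$, $g_\ell^{(\alpha,\beta)}=\mu_\alpha g_\ell^{(1-\alpha)}+\mu_\beta g_\ell^{(1-\beta)}$. *)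

From Stdlib Require Import Reals Lra Arith.
Open Scope R_scope.

Fixpoint falling (sigma : R) (l : nat) : R :=
  match l with
  | O => 1
  | S k => falling sigma k * (sigma - INR k)
  end.

Definition gbinom (sigma : R) (l : nat) : R := falling sigma l / INR (Factorial.fact l).

Definition varpi (sigma : R) (l : nat) : R := (-1) ^ l * gbinom sigma l.

Definition gcoef (sigma : R) (l : nat) : R :=
  match l with
  | O => (1 + sigma) / 2 * varpi sigma 0
  | S k => (1 + sigma) / 2 * varpi sigma l + (1 - sigma) / 2 * varpi sigma k
  end.

(* mu_alpha = tau^alpha A / h^2, real exponent via Rpower (tau > 0) *)
Definition mu (tau gamma C h : R) : R := Rpower tau gamma * C / h ^ 2.

Definition gab (A B alpha beta h tau : R) (l : nat) : R :=
  mu tau alpha A h * gcoef (1 - alpha) l + mu tau beta B h * gcoef (1 - beta) l.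

Definition Qt (A B alpha beta h tau theta : R) : R :=
  let s := (sin (theta * h / 2)) ^ 2 in
  (1 - 4 / 35 * s ^ 3) + 4 * gab A B alpha beta h tau 0 * s * (1 + 1 / 3 * s + 8 / 45 * s ^ 2).

Definition Pt (A B alpha beta h tau theta : R) : R :=
  let s := (sin (theta * h / 2)) ^ 2 in
  (1 - 4 / 35 * s ^ 3) - 4 * gab A B alpha beta h tau 1 * s * (1 + 1 / 3 * s + 8 / 45 * s ^ 2).

From Stdlib Require Import Reals Lra.
Open Scope R_scope.

(* Writing s = sin^2(theta h / 2), both numerator and denominator have the form
   a - g b with a = 1 - 4/35 s^3 > 0 and b = 4 s (1 + s/3 + 8/45 s^2) >= 0, with
   g = -g_0 in the denominator and g = g_1 in the numerator.  The ratio is thus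
   bounded by 1 as soon as |g_1| <= g_0, and for g_l^(alpha,beta) this follows
   from the same inequality for each g_l^(sigma), sigma in [0, 1], since
   mu_alpha, mu_beta > 0. *)

Lemma gcoef0 (sigma : R) : gcoef sigma 0 = (1 + sigma) / 2.
Proof. unfold gcoef, varpi, gbinom; simpl; field. Qed.

Lemma gcoef1 (sigma : R) : gcoef sigma 1 = (1 - 2 * sigma - sigma ^ 2) / 2.
Proof. unfold gcoef, varpi, gbinom; simpl; field. Qed.

Lemma Rabs_gcoef1_le (sigma : R) :
  0 <= sigma <= 1 -> Rabs (gcoef sigma 1) <= gcoef sigma 0.
Proof. intros Hsigma; rewrite gcoef0, gcoef1; apply Rabs_le; split; nra. Qed.

Lemma mu_pos (tau gamma C h : R) : 0 < tau -> 0 < C -> 0 < h -> 0 < mu tau gamma C h.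
Proof.
  intros Htau HC Hh; unfold mu, Rpower, Rdiv.
  apply Rmult_lt_0_compat.
  - apply Rmult_lt_0_compat; [apply exp_pos | exact HC].
  - apply Rinv_0_lt_compat, pow_lt, Hh.
Qed.

Lemma Rabs_gab1_le (A B alpha beta h tau : R) :
  0 < A -> 0 < B -> 0 < alpha < 1 -> 0 < beta < 1 -> 0 < h -> 0 < tau ->
  Rabs (gab A B alpha beta h tau 1) <= gab A B alpha beta h tau 0.
Proof.
  intros HA HB Halpha Hbeta Hh Htau; unfold gab.
  pose proof (mu_pos tau alpha A h Htau HA Hh) as Hmu_alpha.
  pose proof (mu_pos tau beta B h Htau HB Hh) as Hmu_beta.
  eapply Rle_trans; [apply Rabs_triang |].
  rewrite !Rabs_mult, (Rabs_pos_eq (mu tau alpha A h)), (Rabs_pos_eq (mu tau beta B h)) by lra.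
  apply Rplus_le_compat; apply Rmult_le_compat_l; try lra; apply Rabs_gcoef1_le; lra.
Qed.

Lemma Rabs_ratio_le_1 (a b g0 g1 : R) :
  0 < a -> 0 <= b -> Rabs g1 <= g0 -> Rabs ((a - g1 * b) / (a + g0 * b)) <= 1.
Proof.
  intros Ha Hb Hg.
  pose proof (Rle_abs g1); pose proof (Rle_abs (- g1)); rewrite Rabs_Ropp in *.
  assert (Hden : 0 < a + g0 * b) by nra.
  unfold Rdiv; rewrite Rabs_mult, Rabs_inv, (Rabs_pos_eq (a + g0 * b)) by lra.
  apply (Rmult_le_reg_r (a + g0 * b)); [exact Hden |].
  rewrite Rmult_assoc, Rinv_l, Rmult_1_r, Rmult_1_l by lra.
  apply Rabs_le; split; nra.
Qed.

Lemma sin_sq_bounds (x : R) : 0 <= sin x ^ 2 <= 1.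
Proof.
  pose proof (sin2 x); pose proof (pow2_ge_0 (cos x)); pose proof (pow2_ge_0 (sin x)).
  unfold Rsqr in *; simpl in *; lra.
Qed.

Theorem lemma8 (A B alpha beta h tau : R)
  (hA : 0 < A) (hB : 0 < B)
  (ha0 : 0 < alpha) (ha1 : alpha < 1) (hb0 : 0 < beta) (hb1 : beta < 1)
  (hh : 0 < h) (htau : 0 < tau) :
  forall theta : R,
    Rabs (Pt A B alpha beta h tau theta / Qt A B alpha beta h tau theta) <= 1.
Proof.
  intro theta; unfold Pt, Qt.
  pose proof (sin_sq_bounds (theta * h / 2)) as Hs.
  set (s := sin (theta * h / 2) ^ 2) in *.
  set (g0 := gab A B alpha beta h tau 0); set (g1 := gab A B alpha beta h tau 1).
  set (b := 4 * s * (1 + 1 / 3 * s + 8 / 45 * s ^ 2)).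
  replace (4 * g0 * s * _) with (g0 * b) by (unfold b; ring).
  replace (4 * g1 * s * _) with (g1 * b) by (unfold b; ring).
  apply Rabs_ratio_le_1.
  - assert (s ^ 3 <= 1) by (simpl; nra); lra.
  - unfold b; assert (0 <= s ^ 2) by (simpl; nra); nra.
  - apply Rabs_gab1_le; lra.
Qed.
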